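(* Let $\delta$ be a metric on $[a,b]$, let $f:[a,b]\to\mathbb{R}^d$ be Borel measurable and let $g:[a,b]\to\mathbb{R}^d$ satisfy $\|g(t)-g(s)\|\le\mathsf{C}_g\,\delta(t,s)$ for all $s,t\in[a,b]$, for some constant $\mathsf{C}_g>0$. Then for every Borel set $E\subseteq[a,b]$, $$\dim_{\rho_\delta}(Gr_E(f+g))=\dim_{\rho_\delta}(Gr_E(f)).$$
   Context: $\rho_\delta((s,x),(t,y)):=\max\{\delta(s,t),\|x-y\|\}$ on $[a,b]\times\mathbb{R}^d$; for a metric $\rho$, $\mathcal{H}^\beta_\rho(G):=\lim_{\eta\to0}\inf\{\sum_n(2r_n)^\beta: G\subseteq\bigcup_n B_\rho(x_n,r_n),\ r_n\le\eta\}$ and $\dim_\rho(G):=\sup\{\beta>0:\mathcal{H}^\beta_\rho(G)>0\}$. $Gr_E(h):=\{(t,h(t)):t\in E\}$. In the paper $\delta$ is the canonical metric of a Gaussian process. *)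

From HB Require Import structures.
From mathcomp Require Import all_boot all_order all_algebra.
From mathcomp Require Import all_classical all_reals all_analysis.
Set Implicit Arguments. Unset Strict Implicit. Unset Printing Implicit Defensive.
Import Order.TTheory GRing.Theory Num.Theory.
Import numFieldNormedType.Exports.
Local Open Scope classical_set_scope.
Local Open Scope ring_scope.

Section Defs.
Variables (R : realType) (d : nat).

Definition eucl (x : 'rV[R]_d) : R := Num.sqrt (\sum_(i < d) (x ord0 i) ^+ 2).

Definition is_metric_on (A : set R) (delta : R -> R -> R) : Prop :=
  (forall s t, A s -> A t -> 0 <= delta s t) /\
  (forall s t, A s -> A t -> (delta s t = 0 <-> s = t)) /\
  (forall s t, A s -> A t -> delta s t = delta t s) /\
  (forall s t u, A s -> A t -> A u -> delta s u <= delta s t + delta t u).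

Definition rho (delta : R -> R -> R) (p q : R * 'rV[R]_d) : R :=
  Num.max (delta p.1 q.1) (eucl (p.2 - q.2)).

Definition rball (delta : R -> R -> R) (c : R * 'rV[R]_d) (r : R) :=
  [set p | rho delta c p < r].

Definition cover_sums (a b : R) (delta : R -> R -> R) (beta eta : R)
    (G : set (R * 'rV[R]_d)) : set (\bar R) :=
  [set S | exists (c : nat -> R * 'rV[R]_d) (r : nat -> R),
     (forall n, (c n).1 \in `[a, b]) /\ (forall n, 0 < r n <= eta) /\
     G `<=` \bigcup_n rball delta (c n) (r n) /\
     S = (\sum_(0 <= n <oo) ((2 * r n) `^ beta)%:E)%E].

(* H^beta_rho(G) = lim_{eta -> 0} inf{...}; the inf is nonincreasing in eta,
   so the limit is the supremum over eta > 0. *)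
Definition hausdorff (a b : R) (delta : R -> R -> R) (beta : R)
    (G : set (R * 'rV[R]_d)) : \bar R :=
  ereal_sup [set ereal_inf (cover_sums a b delta beta eta G) | eta in [set eta : R | 0 < eta]].

Definition hdim (a b : R) (delta : R -> R -> R) (G : set (R * 'rV[R]_d)) : \bar R :=
  ereal_sup [set beta%:E | beta in [set beta : R | 0 < beta /\ (0 < hausdorff a b delta beta G)%E]].

Definition graph_on (E : set R) (h : R -> 'rV[R]_d) : set (R * 'rV[R]_d) :=
  [set (t, h t) | t in E].

Definition borel_fun_on (A : set R) (f : R -> 'rV[R]_d) : Prop :=
  forall U : set 'rV[R]_d, open U -> measurable (A `&` f @^-1` U).

End Defs.

(* Hausdorff dimension is not increased by maps that are Lipschitz for rho_delta.  Since g is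
   delta-Lipschitz, the shear (t, x) |-> (t, x + g t) is rho_delta-Lipschitz on [a, b] x R^d, and
   it maps the graph of f onto the graph of f + g; its inverse is the shear by - g, which is
   Lipschitz for the same reason.  Hence both graphs have the same dimension. *)
From HB Require Import structures.
From mathcomp Require Import all_boot all_order all_algebra.
From mathcomp Require Import all_classical all_reals all_analysis.
From mathcomp Require Import lra.
Set Implicit Arguments. Unset Strict Implicit. Unset Printing Implicit Defensive.
Import Order.TTheory GRing.Theory Num.Theory.
Import numFieldNormedType.Exports.
Local Open Scope classical_set_scope.
Local Open Scope ring_scope.

Section Euclidean_norm.
Variables (R : realType) (d : nat).
Implicit Types u v : 'rV[R]_d.

Lemma eucl_ge0 u : 0 <= eucl u.
Proof. exact: sqrtr_ge0. Qed.

Lemma euclN u : eucl (- u) = eucl u.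
Proof. by rewrite /eucl; congr Num.sqrt; apply: eq_bigr => i _; rewrite mxE sqrrN. Qed.

Lemma sqr_eucl u : eucl u ^+ 2 = \sum_(i < d) u ord0 i ^+ 2.
Proof. by rewrite sqr_sqrtr // sumr_ge0 // => i _; exact: sqr_ge0. Qed.

(* A weak triangle inequality, which is all we need and avoids Cauchy-Schwarz. *)
Lemma euclD_le u v : eucl (u + v) <= 2 * (eucl u + eucl v).
Proof.
have sum_le : \sum_(i < d) (u + v) ord0 i ^+ 2 <= 2 * (eucl u ^+ 2 + eucl v ^+ 2).
  rewrite !sqr_eucl -big_split mulr_sumr; apply: ler_sum => i _ /=.
  by rewrite mxE; have := sqr_ge0 (u ord0 i - v ord0 i); rewrite !expr2; nra.
have := eucl_ge0 u; have := eucl_ge0 v; move: sum_le.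
rewrite /eucl -/(eucl u) -/(eucl v); set x := eucl u; set y := eucl v => sum_le y0 x0.
rewrite -[leRHS]ger0_norm; last by lra.
rewrite -sqrtr_sqr ler_sqrt; last exact: sqr_ge0.
by apply: (le_trans sum_le); have := mulr_ge0 x0 y0; rewrite !expr2; nra.
Qed.

End Euclidean_norm.

Section Lipschitz_image.
Variables (R : realType) (d : nat) (a b : R) (delta : R -> R -> R).
Variables (K : R) (phi : R * 'rV[R]_d -> R * 'rV[R]_d).
Hypothesis K_gt0 : 0 < K.
Hypothesis phi_strip : forall p, p.1 \in `[a, b] -> (phi p).1 \in `[a, b].
Hypothesis phi_lipschitz : forall p q, p.1 \in `[a, b] -> q.1 \in `[a, b] ->
  rho delta (phi p) (phi q) <= K * rho delta p q.

Variable G : set (R * 'rV[R]_d).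
Hypothesis G_strip : forall p, G p -> p.1 \in `[a, b].

Lemma cover_sums_image beta eta :
  [set ((K `^ beta)%:E * S)%E | S in cover_sums a b delta beta eta G] `<=`
  cover_sums a b delta beta (K * eta) (phi @` G).
Proof.
move=> _ [_ [c [r [c_strip [r_bnd [G_cover ->]]]]] <-].
exists (phi \o c), (fun n => K * r n); split; first by move=> n; exact: phi_strip.
split; first by move=> n; have /andP[r0 r_eta] := r_bnd n; rewrite mulr_gt0 // ler_pM2l.
split.
  move=> _ [p Gp <-]; have [n _ p_ball] := G_cover p Gp; exists n => //.
  rewrite /rball /= (le_lt_trans (phi_lipschitz (c_strip n) (G_strip Gp))) //.
  by rewrite ltr_pM2l.
rewrite -nneseriesZl; last by move=> n _; rewrite lee_fin powR_ge0.
apply: eq_eseriesr => n _; have /andP[r0 _] := r_bnd n.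
by rewrite mulrCA (powRM _ (ltW K_gt0)) ?EFinM ?mulr_ge0 ?ltW.
Qed.

Lemma hausdorff_image_le beta :
  (hausdorff a b delta beta (phi @` G) <= (K `^ beta)%:E * hausdorff a b delta beta G)%E.
Proof.
apply: ge_ereal_sup => _ [eta eta0 <-].
have -> : eta = K * (eta / K) by rewrite mulrC divfK ?gt_eqF.
apply: le_trans (ereal_inf_le_tmp (@cover_sums_image beta (eta / K))) _.
rewrite ereal_inf_pZl ?powR_gt0 // lee_wpmul2l ?lee_fin ?powR_ge0 //.
by apply: ereal_sup_ubound; exists (eta / K) => //; exact: divr_gt0.
Qed.

Lemma hdim_image_le : (hdim a b delta (phi @` G) <= hdim a b delta G)%E.
Proof.
apply: ereal_sup_le => _ [beta [beta0 H_gt0] <-]; exists beta => //; split => //.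
rewrite ltNge; apply/negP => H_le0; move: H_gt0; apply/negP; rewrite -leNgt.
apply: le_trans (hausdorff_image_le _) _.
by rewrite mule_ge0_le0 // lee_fin powR_ge0.
Qed.

End Lipschitz_image.

Section Shear.
Variables (R : realType) (d : nat) (a b : R) (delta : R -> R -> R).

Definition shear (h : R -> 'rV[R]_d) (p : R * 'rV[R]_d) := (p.1, p.2 + h p.1).

Lemma graph_on_shear (E : set R) (f h : R -> 'rV[R]_d) :
  graph_on E (f \+ h) = shear h @` graph_on E f.
Proof. by rewrite /graph_on image_comp. Qed.

Lemma graph_on_strip (E : set R) (f : R -> 'rV[R]_d) :
  E `<=` [set` `[a, b]] -> forall p, graph_on E f p -> p.1 \in `[a, b].
Proof. by move=> Eab _ [t Et <-]; exact: Eab. Qed.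

Lemma shear_lipschitz (h : R -> 'rV[R]_d) (C : R) : 0 <= C ->
  (forall s t, s \in `[a, b] -> t \in `[a, b] -> eucl (h t - h s) <= C * delta t s) ->
  forall p q, p.1 \in `[a, b] -> q.1 \in `[a, b] ->
    rho delta (shear h p) (shear h q) <= 2 * (1 + C) * rho delta p q.
Proof.
move=> C0 h_lip [s x] [t y] /= sab tab.
have rho_ge0 : 0 <= rho delta (s, x) (t, y) by rewrite le_max eucl_ge0 orbT.
have delta_le : delta s t <= rho delta (s, x) (t, y) by rewrite le_max lexx.
have eucl_le : eucl (x - y) <= rho delta (s, x) (t, y) by rewrite le_max lexx orbT.
have h_le : eucl (h s - h t) <= C * rho delta (s, x) (t, y).
  by apply: le_trans (h_lip _ _ tab sab) _; rewrite ler_wpM2l.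
set r := rho delta (s, x) (t, y) in rho_ge0 delta_le eucl_le h_le *.
rewrite /rho /= ge_max; apply/andP; split; first by nra.
have -> : x + h s - (y + h t) = (x - y) + (h s - h t) by rewrite opprD addrACA.
by apply: le_trans (euclD_le _ _) _; nra.
Qed.

End Shear.

Theorem lemma3p8 (R : realType) (d : nat) (a b : R) (delta : R -> R -> R)
    (f g : R -> 'rV[R]_d) (Cg : R) :
  a < b ->
  is_metric_on [set` `[a, b]] delta ->
  borel_fun_on [set` `[a, b]] f ->
  0 < Cg ->
  (forall s t, s \in `[a, b] -> t \in `[a, b] -> eucl (g t - g s) <= Cg * delta t s) ->
  forall E : set R, measurable E -> E `<=` [set` `[a, b]] ->
    hdim a b delta (graph_on E (f \+ g)) = hdim a b delta (graph_on E f).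
Proof.
move=> _ _ _ Cg0 g_lip E _ Eab.
have K_gt0 : 0 < 2 * (1 + Cg) by lra.
have shear_strip (h : R -> 'rV[R]_d) p : p.1 \in `[a, b] -> (shear h p).1 \in `[a, b] by [].
have opp_g_lip s t : s \in `[a, b] -> t \in `[a, b] ->
    eucl ((- g) t - (- g) s) <= Cg * delta t s.
  by move=> sab tab; rewrite /= -opprD euclN g_lip.
apply: le_anti; apply/andP; split.
- rewrite graph_on_shear.
  exact: (hdim_image_le K_gt0 (shear_strip g)
            (shear_lipschitz (ltW Cg0) g_lip) (graph_on_strip Eab)).
- have -> : graph_on E f = shear (- g) @` graph_on E (f \+ g).
    by rewrite -graph_on_shear; congr graph_on; apply/funext => t /=; rewrite addrK.
  exact: (hdim_image_le K_gt0 (shear_strip (- g))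
            (shear_lipschitz (ltW Cg0) opp_g_lip) (graph_on_strip Eab)).
Qed.
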